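(* Let $\mathbb A=(A_n)_{n\in\mathbb N}$ be a sequence of invertible linear operators on $\mathbb R^d$ and $\mathcal S=\{\|\cdot\|_n;\ n\in\mathbb N\}$ a sequence of norms on $\mathbb R^d$ such that there exist $K,a>0$ with $\|\mathcal A(m,n)x\|_m\le K(m/n)^a\|x\|_n$ and $\|\mathcal A(n,m)x\|_n\le K(m/n)^a\|x\|_m$ for all $m\ge n$ and $x$. Let $\mathbb B=(B_n)_{n\in\mathbb Z^+}$ with $B_n=\mathcal A(2^{n+1},2^n)$ and $\tilde{\mathcal S}=\{\|\cdot\|_{2^n};\ n\in\mathbb Z^+\}$. Then for every $\tau\in\mathbb R$, $$\tau\in\Sigma_{PD,\mathbb A,\mathcal S}\iff 2^\tau\in\Sigma_{ED,\mathbb B,\tilde{\mathcal S}}.$$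
   Context: $\mathbb N=\{1,2,\dots\}$, $\mathbb Z^+=\{0,1,\dots\}$. For invertible $(C_n)$, $\mathcal C(m,n)=C_{m-1}\cdots C_n$ ($m>n$), $\mathrm{Id}$ ($m=n$), $C_m^{-1}\cdots C_{n-1}^{-1}$ ($m<n$). Strong polynomial dichotomy of $(C_n)_{n\in\mathbb N}$ w.r.t. $\{\|\cdot\|_n\}$: there exist $K>0$, $a\ge\lambda>0$, projections $P_n$ with $C_nP_n=P_{n+1}C_n$ and, for $m\ge n$, $x$, $Q_m=\mathrm{Id}-P_m$: $\|\mathcal C(m,n)P_nx\|_m\le K(m/n)^{-\lambda}\|x\|_n$, $\|\mathcal C(n,m)Q_mx\|_n\le K(m/n)^{-\lambda}\|x\|_m$, $\|\mathcal C(m,n)x\|_m\le K(m/n)^a\|x\|_n$, $\|\mathcal C(n,m)x\|_n\le K(m/n)^a\|x\|_m$. Strong exponential dichotomy of $(C_n)_{n\in\mathbb Z^+}$ w.r.t. $\{|\cdot|_n\}$: same with $(m/n)^{-\lambda}$ replaced by $e^{-\lambda(m-n)}$ and $(m/n)^a$ by $e^{a(m-n)}$. $\Sigma_{PD,\mathbb A,\mathcal S}$: set of $\tau\in\mathbb R$ such that $(((n+1)/n)^{-\tau}A_n)_{n\in\mathbb N}$ does not admit a strong polynomial dichotomy w.r.t. $\mathcal S$. $\Sigma_{ED,\mathbb B,\tilde{\mathcal S}}$: set of $\tau>0$ such that $(\tau^{-1}B_n)_{n\in\mathbb Z^+}$ does not admit a strong exponential dichotomy w.r.t. $\tilde{\mathcal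 S}$. *)

From HB Require Import structures.
From mathcomp Require Import all_boot all_order all_algebra.
From mathcomp Require Import all_classical all_reals all_analysis.
Set Implicit Arguments. Unset Strict Implicit. Unset Printing Implicit Defensive.
Import Order.TTheory GRing.Theory Num.Theory.
Local Open Scope ring_scope.

Section Defs.
Variables (R : realType) (d : nat).

Definition is_norm (N : 'cV[R]_d -> R) : Prop :=
  [/\ forall x, 0 <= N x,
      forall x, N x = 0 -> x = 0,
      forall (c : R) x, N (c *: x) = `|c| * N x
    & forall x y, N (x + y) <= N x + N y].

(* fwd C n k = C_{n+k-1} ... C_{n+1} C_n  (= \mathcal C(n+k, n)) *)
Fixpoint fwd (C : nat -> 'M[R]_d) (n k : nat) : 'M[R]_d :=
  match k with
  | 0 => 1%:M
  | k'.+1 => C (n + k')%N *m fwd C n k'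
  end.

(* bwd C m k = C_m^{-1} C_{m+1}^{-1} ... C_{m+k-1}^{-1}  (= \mathcal C(m, m+k)) *)
Fixpoint bwd (C : nat -> 'M[R]_d) (m k : nat) : 'M[R]_d :=
  match k with
  | 0 => 1%:M
  | k'.+1 => bwd C m k' *m invmx (C (m + k')%N)
  end.

Definition evol (C : nat -> 'M[R]_d) (m n : nat) : 'M[R]_d :=
  if (n <= m)%N then fwd C n (m - n) else bwd C m (n - m).

Definition strong_PD (C : nat -> 'M[R]_d) (S : nat -> 'cV[R]_d -> R) : Prop :=
  exists (K a lam : R) (P : nat -> 'M[R]_d),
    0 < K /\ 0 < lam /\ lam <= a /\
        (forall n, (1 <= n)%N -> P n *m P n = P n) /\
        (forall n, (1 <= n)%N -> C n *m P n = P n.+1 *m C n) /\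
        forall m n (x : 'cV[R]_d), (1 <= n)%N -> (n <= m)%N ->
        [/\ S m (evol C m n *m (P n *m x)) <= K * (m%:R / n%:R) `^ (- lam) * S n x,
            S n (evol C n m *m ((1%:M - P m) *m x)) <= K * (m%:R / n%:R) `^ (- lam) * S m x,
            S m (evol C m n *m x) <= K * (m%:R / n%:R) `^ a * S n x
          & S n (evol C n m *m x) <= K * (m%:R / n%:R) `^ a * S m x].

Definition strong_ED (C : nat -> 'M[R]_d) (S : nat -> 'cV[R]_d -> R) : Prop :=
  exists (K a lam : R) (P : nat -> 'M[R]_d),
    0 < K /\ 0 < lam /\ lam <= a /\
        (forall n, P n *m P n = P n) /\
        (forall n, C n *m P n = P n.+1 *m C n) /\
        forall m n (x : 'cV[R]_d), (n <= m)%N ->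
        [/\ S m (evol C m n *m (P n *m x)) <= K * expR (- lam * (m%:R - n%:R)) * S n x,
            S n (evol C n m *m ((1%:M - P m) *m x)) <= K * expR (- lam * (m%:R - n%:R)) * S m x,
            S m (evol C m n *m x) <= K * expR (a * (m%:R - n%:R)) * S n x
          & S n (evol C n m *m x) <= K * expR (a * (m%:R - n%:R)) * S m x].

Definition SigmaPD (A : nat -> 'M[R]_d) (S : nat -> 'cV[R]_d -> R) (tau : R) : Prop :=
  ~ strong_PD (fun n => ((n.+1)%:R / n%:R) `^ (- tau) *: A n) S.

Definition SigmaED (B : nat -> 'M[R]_d) (S : nat -> 'cV[R]_d -> R) (tau : R) : Prop :=
  0 < tau /\ ~ strong_ED (fun n => tau^-1 *: B n) S.

End Defs.

From HB Require Import structures.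
From mathcomp Require Import all_boot all_order all_algebra.
From mathcomp Require Import all_classical all_reals all_analysis.
From mathcomp Require Import ring lra zify.
Import Order.TTheory GRing.Theory Num.Theory.
Local Open Scope ring_scope.

(* Rescaling A_n by ((n+1)/n)^(-tau) telescopes: the evolution of the rescaled
   sequence from n to m is (m/n)^(-tau) times that of A, so its samples at the
   dyadic times 2^n are the operators (2^tau)^-1 B_n.  It thus suffices to show
   that a sequence C with bounded polynomial growth admits a strong polynomial
   dichotomy iff its dyadic samples C(2^(n+1), 2^n) admit a strong exponential
   one.  Restricting a polynomial dichotomy to the times 2^n gives the
   exponential one, because (2^m/2^n)^(-lam) = exp(-lam ln 2 (m - n)).
   Conversely, the projection at time k is obtained by transporting the dyadic
   projection at 2^p, 2^p <= k < 2^(p+1), along the evolution; bounded growth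
   makes every transport inside such a block cost at most K 2^a, and the gap
   between the dyadic indices of n <= m controls (m/n)^(-lam/ln 2). *)

Section Evolution.
Context {R : realType} {d : nat}.
Implicit Types (C : nat -> 'M[R]_d) (M N : 'M[R]_d).

Lemma invmx_uniq M N : M \in unitmx -> M *m N = 1%:M -> invmx M = N.
Proof. by move=> uM MN; rewrite -[invmx M]mulmx1 -MN mulKmx. Qed.

Lemma fwd_add C n i j : fwd C n (i + j) = fwd C (n + i) j *m fwd C n i.
Proof.
elim: j => [|j IH]; first by rewrite addn0 /= mul1mx.
by rewrite addnS /= IH mulmxA addnA.
Qed.

Lemma evol_id C n : evol C n n = 1%:M.
Proof. by rewrite /evol leqnn subnn. Qed.

Lemma evol_succ C n : evol C n.+1 n = C n.
Proof. by rewrite /evol leqnSn subSnn /= addn0 mulmx1. Qed.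

Lemma evol_comm C (P : nat -> 'M[R]_d) L i j :
  (forall k, (L <= k)%N -> C k *m P k = P k.+1 *m C k) ->
  (L <= i)%N -> (i <= j)%N -> P j *m evol C j i = evol C j i *m P i.
Proof.
move=> CP Li ij; rewrite /evol ij -[in P j](subnKC ij).
elim: (j - i)%N => [|k IH] /=; first by rewrite addn0 mulmx1 mul1mx.
by rewrite addnS mulmxA -CP ?(leq_trans Li) ?leq_addr // -!mulmxA IH.
Qed.

Section Invertible.
Context {C : nat -> 'M[R]_d} {L : nat}.
Hypothesis C_unit : forall j, (L <= j)%N -> C j \in unitmx.

Lemma fwd_unit n k : (L <= n)%N -> fwd C n k \in unitmx.
Proof.
move=> Ln; elim: k => [|k IH] /=; first exact: unitmx1.
by rewrite unitmx_mul IH C_unit ?andbT // (leq_trans Ln) ?leq_addr.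
Qed.

Lemma bwd_invmx n k : (L <= n)%N -> bwd C n k = invmx (fwd C n k).
Proof.
move=> Ln; elim: k => [|k IH] /=; first by rewrite invmx1.
have uC : C (n + k)%N \in unitmx by rewrite C_unit // (leq_trans Ln) ?leq_addr.
symmetry; apply: invmx_uniq; first by rewrite unitmx_mul uC fwd_unit.
by rewrite IH -mulmxA (mulmxA (fwd C n k)) mulmxV ?fwd_unit // mul1mx mulmxV.
Qed.

Let base j := fwd C L (j - L).

Let evol_base m n : (L <= m)%N -> (L <= n)%N -> evol C m n = base m *m invmx (base n).
Proof.
have fwdE k j : (L <= k)%N -> fwd C k j = base (k + j) *m invmx (base k).
  move=> Lk; rewrite /base (_ : (k + j - L = (k - L) + j)%N); last by lia.
  by rewrite fwd_add subnKC // mulmxK // fwd_unit.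
move=> Lm Ln; rewrite /evol; case: leqP => nm; first by rewrite fwdE // subnKC.
rewrite bwd_invmx // fwdE // subnKC ?(ltnW nm) //.
apply: invmx_uniq; first by rewrite unitmx_mul unitmx_inv !fwd_unit.
by rewrite -mulmxA (mulmxA (invmx _)) mulVmx ?fwd_unit // mul1mx mulmxV ?fwd_unit.
Qed.

Lemma evol_cocycle m k n : (L <= m)%N -> (L <= k)%N -> (L <= n)%N ->
  evol C m k *m evol C k n = evol C m n.
Proof.
move=> Lm Lk Ln; rewrite !evol_base // -mulmxA (mulmxA (invmx _)).
by rewrite mulVmx ?fwd_unit // mul1mx.
Qed.

Lemma evol_unit m n : (L <= m)%N -> (L <= n)%N -> evol C m n \in unitmx.
Proof. by move=> Lm Ln; rewrite evol_base // unitmx_mul unitmx_inv !fwd_unit. Qed.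

Lemma evol_invmx m n : (L <= m)%N -> (L <= n)%N -> evol C n m = invmx (evol C m n).
Proof.
move=> Lm Ln; symmetry; apply: invmx_uniq; first exact: evol_unit.
by rewrite evol_cocycle // evol_id.
Qed.

End Invertible.

Lemma evol_sample C L (t : nat -> nat) m n :
  (forall j, (L <= j)%N -> C j \in unitmx) -> (forall j, (L <= t j)%N) ->
  evol (fun j => evol C (t j.+1) (t j)) m n = evol C (t m) (t n).
Proof.
move=> C_unit Lt; set D := fun j => _.
have fwdD k j : fwd D k j = evol C (t (k + j)%N) (t k).
  elim: j => [|j IH] /=; first by rewrite addn0 evol_id.
  by rewrite IH /D addnS (evol_cocycle C_unit).
rewrite {1}/evol; case: leqP => nm; first by rewrite fwdD subnKC.
have D_unit j : (0 <= j)%N -> D j \in unitmx by move=> _; exact: (evol_unit C_unit).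
by rewrite (bwd_invmx D_unit) // fwdD subnKC ?(ltnW nm) // -(evol_invmx C_unit).
Qed.

Lemma fwd_scale C (c f : nat -> R) n k :
  (forall j, (n <= j)%N -> c j = f j.+1 / f j) ->
  (forall j, (n <= j)%N -> f j != 0) ->
  fwd (fun j => c j *: C j) n k = (f (n + k)%N / f n) *: fwd C n k.
Proof.
move=> cE f_neq0; elim: k => [|k IH] /=; first by rewrite addn0 divff ?f_neq0 ?scale1r.
rewrite IH -scalemxAr -scalemxAl scalerA cE ?leq_addr // addnS; congr (_ *: _).
by rewrite mulrC mulrA divfK // f_neq0 // leq_addr.
Qed.

Lemma evol_scale C L (c f : nat -> R) m n :
  (forall j, (L <= j)%N -> C j \in unitmx) ->
  (forall j, (L <= j)%N -> c j = f j.+1 / f j) ->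
  (forall j, (L <= j)%N -> f j != 0) ->
  (L <= m)%N -> (L <= n)%N ->
  evol (fun j => c j *: C j) m n = (f m / f n) *: evol C m n.
Proof.
move=> C_unit cE f_neq0 Lm Ln.
have cC_unit j : (L <= j)%N -> c j *: C j \in unitmx.
  by move=> Lj; rewrite unitmxZ ?C_unit // cE // unitfE mulf_neq0 ?invr_eq0 ?f_neq0 ?leqW.
have fwdE k j : (L <= k)%N -> fwd (fun j => c j *: C j) k j = (f (k + j)%N / f k) *: fwd C k j.
  move=> Lk; apply: fwd_scale => i ki; have Li := leq_trans Lk ki; [exact: cE | exact: f_neq0].
rewrite /evol; case: leqP => nm; first by rewrite fwdE // subnKC.
rewrite (bwd_invmx cC_unit) // (bwd_invmx C_unit) // fwdE // subnKC ?(ltnW nm) //.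
rewrite invmxZ; last by rewrite unitmxZ ?(fwd_unit C_unit) // unitfE mulf_neq0 ?invr_eq0 ?f_neq0.
by rewrite invf_div.
Qed.

End Evolution.

Section Norm.
Context {R : realType} {d : nat} {N : 'cV[R]_d -> R}.
Hypothesis N_norm : is_norm N.

Lemma is_norm_ge0 x : 0 <= N x.
Proof. by case: N_norm. Qed.

Lemma is_normZ c x : N (c *: x) = `|c| * N x.
Proof. by case: N_norm. Qed.

End Norm.

Local Notation lg k := (trunc_log 2 k).

Section RealFacts.
Variable R : realType.

Lemma ln2_gt0 : 0 < ln (2 : R).
Proof. by rewrite ln_gt0 // ltr1n. Qed.

Lemma ln_pow2 k : ln ((2 ^ k)%:R : R) = k%:R * ln 2.
Proof. by rewrite natrX lnXn // mulr_natl. Qed.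

Lemma powR_natdiv m n (y : R) : (0 < m)%N -> (0 < n)%N ->
  (m%:R / n%:R) `^ y = expR (y * (ln m%:R - ln n%:R)).
Proof.
by move=> m0 n0; rewrite /powR gt_eqF ?divr_gt0 ?ltr0n // ln_div // posrE ltr0n.
Qed.

Lemma powR_pow2_div m n (y : R) :
  ((2 ^ m)%:R / (2 ^ n)%:R) `^ y = expR (y * ln 2 * (m%:R - n%:R)).
Proof. by rewrite powR_natdiv ?expn_gt0 // !ln_pow2; congr expR; ring. Qed.

Lemma powR_divr (x y r : R) : 0 < x -> 0 < y -> (x / y) `^ r = x `^ r / y `^ r.
Proof.
by move=> x_gt0 y_gt0; rewrite /powR !gt_eqF ?divr_gt0 // ln_div ?posrE // mulrBr expRB.
Qed.

Lemma powR_divrN (x y r : R) : 0 < x -> 0 < y -> (y / x) `^ (- r) = (x / y) `^ r.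
Proof. by move=> x_gt0 y_gt0; rewrite powRN !powR_divr // invf_div. Qed.

Lemma powR_mul_le_normD (r b c : R) : 1 <= r -> r `^ b * r `^ c <= r `^ (c + `|b|).
Proof.
move=> r_ge1; rewrite -powRD; last by apply/implyP => _; rewrite gt_eqF // (lt_le_trans ltr01).
by apply: ler_powR => //; rewrite addrC lerD2l ler_norm.
Qed.

Lemma ln_trunc_log2_bounds k : (1 <= k)%N ->
  (lg k)%:R * ln 2 <= ln (k%:R : R) <= ((lg k)%:R + 1) * ln 2.
Proof.
move=> k_gt0; have /andP[lo hi] := trunc_log_bounds (isT : (1 < 2)%N) k_gt0.
rewrite natr1 -!ln_pow2 !ler_ln ?posrE ?ltr0n ?expn_gt0 // !ler_nat lo.
exact: ltnW.
Qed.

Lemma trunc_log2_gap (lam : R) m n : 0 <= lam -> (1 <= n)%N -> (n <= m)%N ->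
  expR (- lam * ((lg m)%:R - (lg n)%:R)) <=
  expR lam * (m%:R / n%:R : R) `^ (- (lam / ln 2)).
Proof.
move=> lam_ge0 n_gt0 nm; have m_gt0 := leq_trans n_gt0 nm.
have ln2 := ln2_gt0.
have /andP[_ hm] := ln_trunc_log2_bounds _ m_gt0.
have /andP[hn _] := ln_trunc_log2_bounds _ n_gt0.
rewrite powR_natdiv // -expRD ler_expR.
set mu := lam / ln 2; have mu_ge0 : 0 <= mu by rewrite divr_ge0 // ltW.
have -> : lam = mu * ln 2 by rewrite divfK ?gt_eqF.
have : mu * (ln m%:R - ln n%:R) <= mu * (((lg m)%:R + 1 - (lg n)%:R) * ln 2).
  by apply: ler_wpM2l => //; lra.
lra.
Qed.

End RealFacts.

Definition poly_bounded_growth {R : realType} {d : nat}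
    (C : nat -> 'M[R]_d) (S : nat -> 'cV[R]_d -> R) : Prop :=
  exists K a : R, 0 < K /\ 0 <= a /\
    forall m n (x : 'cV[R]_d), (1 <= n)%N -> (n <= m)%N ->
      S m (evol C m n *m x) <= K * (m%:R / n%:R) `^ a * S n x /\
      S n (evol C n m *m x) <= K * (m%:R / n%:R) `^ a * S m x.

Definition dyadic {R : realType} {d : nat} (C : nat -> 'M[R]_d) : nat -> 'M[R]_d :=
  fun n => evol C (2 ^ n.+1) (2 ^ n).

Section DyadicSampling.
Context {R : realType} {d : nat}.
Variables (C : nat -> 'M[R]_d) (S : nat -> 'cV[R]_d -> R).
Hypothesis C_unit : forall n, (1 <= n)%N -> C n \in unitmx.

Lemma evol_dyadic m n : evol (dyadic C) m n = evol C (2 ^ m) (2 ^ n).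
Proof. by apply: evol_sample C_unit _ => j; rewrite expn_gt0. Qed.

Lemma dyadic_ED_of_strong_PD : strong_PD C S -> strong_ED (dyadic C) (fun n => S (2 ^ n)%N).
Proof.
case=> K [a [lam [P [K_gt0 [lam_gt0 [lam_le_a [P_idem [P_comm P_bounds]]]]]]]].
have ln2 := ln2_gt0 R.
exists K, (a * ln 2), (lam * ln 2), (fun n => P (2 ^ n)%N).
split=> //; split; first by rewrite mulr_gt0.
split; first by rewrite ler_pM2r.
split; first by move=> n; rewrite P_idem // expn_gt0.
split.
  move=> n; apply/esym/evol_comm; first exact: P_comm.
    by rewrite expn_gt0.
  by rewrite leq_exp2l.
move=> m n x nm; have := P_bounds (2 ^ m)%N (2 ^ n)%N x.
by rewrite !evol_dyadic !powR_pow2_div -!mulNr expn_gt0 leq_exp2l //; apply.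
Qed.

End DyadicSampling.

Section DyadicInterpolation.
Context {R : realType} {d : nat}.
Variables (C : nat -> 'M[R]_d) (S : nat -> 'cV[R]_d -> R).
Variables (K a : R).
Hypothesis C_unit : forall n, (1 <= n)%N -> C n \in unitmx.
Hypothesis S_norm : forall n, (1 <= n)%N -> is_norm (S n).
Hypothesis K_gt0 : 0 < K.
Hypothesis a_ge0 : 0 <= a.
Hypothesis C_growth : forall m n x, (1 <= n)%N -> (n <= m)%N ->
  S m (evol C m n *m x) <= K * (m%:R / n%:R) `^ a * S n x /\
  S n (evol C n m *m x) <= K * (m%:R / n%:R) `^ a * S m x.

Local Notation E := (evol C).

Let S_ge0 n x : (1 <= n)%N -> 0 <= S n x.
Proof. by move=> n_gt0; exact: is_norm_ge0 (S_norm _ n_gt0) x. Qed.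

Let cocycle m k n : (1 <= m)%N -> (1 <= k)%N -> (1 <= n)%N -> E m k *m E k n = E m n.
Proof. exact: evol_cocycle C_unit m k n. Qed.

Let pow2_gt0 k : (1 <= 2 ^ k)%N. Proof. exact: expn_gt0. Qed.

Let G := K * 2 `^ a.

Let G_ge0 : 0 <= G. Proof. by rewrite mulr_ge0 ?powR_ge0 // ltW. Qed.

Lemma evol_trunc_log2_bound k x : (1 <= k)%N ->
  S k (E k (2 ^ lg k) *m x) <= G * S (2 ^ lg k) x /\
  S (2 ^ lg k) (E (2 ^ lg k) k *m x) <= G * S k x.
Proof.
move=> k_gt0; have /andP[lo hi] := trunc_log_bounds (isT : (1 < 2)%N) k_gt0.
have ratio : (k%:R / (2 ^ lg k)%:R) `^ a <= 2 `^ a.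
  apply: ge0_ler_powR; rewrite // ?nnegrE ?divr_ge0 //.
  by rewrite ler_pdivrMr ?ltr0n // -natrM ler_nat -expnS ltnW.
have [fwd bwd] := C_growth _ _ x (pow2_gt0 (lg k)) lo.
split; [apply: le_trans fwd _ | apply: le_trans bwd _];
  by apply: ler_wpM2r; rewrite ?S_ge0 // ler_wpM2l // ltW.
Qed.

Section FromDyadicDichotomy.
Variables (KE lamE : R) (Q : nat -> 'M[R]_d).
Hypothesis KE_ge0 : 0 <= KE.
Hypothesis lamE_gt0 : 0 < lamE.
Hypothesis Q_idem : forall n, Q n *m Q n = Q n.
Hypothesis Q_comm : forall n, dyadic C n *m Q n = Q n.+1 *m dyadic C n.
Hypothesis Q_stable : forall m n x, (n <= m)%N ->
  S (2 ^ m) (E (2 ^ m) (2 ^ n) *m (Q n *m x)) <=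
  KE * expR (- lamE * (m%:R - n%:R)) * S (2 ^ n) x.
Hypothesis Q_unstable : forall m n x, (n <= m)%N ->
  S (2 ^ n) (E (2 ^ n) (2 ^ m) *m ((1%:M - Q m) *m x)) <=
  KE * expR (- lamE * (m%:R - n%:R)) * S (2 ^ m) x.

Definition interp_proj k := E k (2 ^ lg k) *m Q (lg k) *m E (2 ^ lg k) k.

Lemma Q_evol_comm p q : (p <= q)%N -> Q q *m E (2 ^ q) (2 ^ p) = E (2 ^ q) (2 ^ p) *m Q p.
Proof.
by move=> pq; rewrite -evol_dyadic //; apply: (evol_comm _ _ 0) => // k _; exact: Q_comm.
Qed.

Lemma interp_proj_idem k : (1 <= k)%N -> interp_proj k *m interp_proj k = interp_proj k.
Proof.
move=> k_gt0; rewrite /interp_proj -!mulmxA (mulmxA (E _ k)) cocycle // evol_id mul1mx.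
by rewrite (mulmxA (Q _)) Q_idem.
Qed.

Lemma interp_proj_evol i j : (1 <= i)%N -> (i <= j)%N ->
  interp_proj j *m E j i = E j i *m interp_proj i.
Proof.
move=> i_gt0 ij; have j_gt0 := leq_trans i_gt0 ij.
rewrite /interp_proj -!mulmxA cocycle // -(cocycle (2 ^ lg j) (2 ^ lg i) i) //.
rewrite !mulmxA -(mulmxA _ (Q _)) Q_evol_comm ?leq_trunc_log //.
by rewrite !mulmxA !cocycle.
Qed.

Lemma interp_proj_compl k : (1 <= k)%N ->
  1%:M - interp_proj k = E k (2 ^ lg k) *m (1%:M - Q (lg k)) *m E (2 ^ lg k) k.
Proof.
move=> k_gt0; rewrite /interp_proj mulmxBr mulmx1 mulmxBl cocycle //.
by rewrite evol_id.
Qed.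

Lemma evol_dyadic_sandwich_bound j k (M : 'M[R]_d) (c : R) x : (1 <= j)%N -> (1 <= k)%N ->
  0 <= c -> (forall y, S (2 ^ lg j) (M *m y) <= c * S (2 ^ lg k) y) ->
  S j (E j (2 ^ lg j) *m (M *m (E (2 ^ lg k) k *m x))) <= G * G * c * S k x.
Proof.
move=> j_gt0 k_gt0 c_ge0 M_bound.
apply: le_trans (evol_trunc_log2_bound _ _ j_gt0).1 _.
apply: le_trans (ler_wpM2l G_ge0 (M_bound _)) _.
rewrite (_ : G * G * c * S k x = G * (c * (G * S k x))); last by ring.
by rewrite ler_wpM2l // ler_wpM2l // (evol_trunc_log2_bound _ _ k_gt0).2.
Qed.

Let lamP := lamE / ln 2.

Let KP := G * G * (KE * expR lamE).

Lemma interp_proj_stable m n x : (1 <= n)%N -> (n <= m)%N ->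
  S m (E m n *m (interp_proj n *m x)) <= KP * (m%:R / n%:R) `^ (- lamP) * S n x.
Proof.
move=> n_gt0 nm; have m_gt0 := leq_trans n_gt0 nm.
have -> : E m n *m (interp_proj n *m x) = E m (2 ^ lg m) *m
    ((E (2 ^ lg m) (2 ^ lg n) *m Q (lg n)) *m (E (2 ^ lg n) n *m x)).
  by rewrite /interp_proj !mulmxA !cocycle.
rewrite /KP -[G * G * _ * _]mulrA; apply: evol_dyadic_sandwich_bound => //.
  by rewrite !mulr_ge0 ?expR_ge0 ?powR_ge0.
move=> y; rewrite -mulmxA; apply: le_trans (Q_stable _ _ _ (leq_trunc_log 2 nm)) _.
apply: ler_wpM2r; first exact: S_ge0.
by rewrite -mulrA; apply: ler_wpM2l => //; apply: trunc_log2_gap nm; rewrite ?ltW.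
Qed.

Lemma interp_proj_unstable m n x : (1 <= n)%N -> (n <= m)%N ->
  S n (E n m *m ((1%:M - interp_proj m) *m x)) <= KP * (m%:R / n%:R) `^ (- lamP) * S m x.
Proof.
move=> n_gt0 nm; have m_gt0 := leq_trans n_gt0 nm.
have -> : E n m *m ((1%:M - interp_proj m) *m x) = E n (2 ^ lg n) *m
    ((E (2 ^ lg n) (2 ^ lg m) *m (1%:M - Q (lg m))) *m (E (2 ^ lg m) m *m x)).
  by rewrite interp_proj_compl // !mulmxA !cocycle.
rewrite /KP -[G * G * _ * _]mulrA; apply: evol_dyadic_sandwich_bound => //.
  by rewrite !mulr_ge0 ?expR_ge0 ?powR_ge0.
move=> y; rewrite -mulmxA; apply: le_trans (Q_unstable _ _ _ (leq_trunc_log 2 nm)) _.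
apply: ler_wpM2r; first exact: S_ge0.
by rewrite -mulrA; apply: ler_wpM2l => //; apply: trunc_log2_gap nm; rewrite ?ltW.
Qed.

Lemma interp_proj_strong_PD : strong_PD C S.
Proof.
have ln2 := ln2_gt0 R.
have lamP_gt0 : 0 < lamP by rewrite /lamP divr_gt0.
have KP_ge0 : 0 <= KP by rewrite /KP !mulr_ge0 ?expR_ge0 ?powR_ge0 // ltW.
have ratio_ge1 m n : (1 <= n)%N -> (n <= m)%N -> 1 <= (m%:R / n%:R : R).
  by move=> n_gt0 nm; rewrite ler_pdivlMr ?ltr0n // mul1r ler_nat.
have growth_weaken (r s : R) : 1 <= r -> 0 <= s ->
    K * r `^ a * s <= (K + KP) * r `^ (lamP + a) * s.
  move=> r_ge1 s_ge0; apply: ler_wpM2r => //; apply: ler_pM.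
  - exact: ltW.
  - exact: powR_ge0.
  - by rewrite lerDl.
  - by apply: ler_powR; rewrite // lerDr ltW.
have dichotomy_weaken (r s t : R) : 0 <= r -> 0 <= s -> t <= KP * r * s -> t <= (K + KP) * r * s.
  move=> r_ge0 s_ge0 /le_trans; apply; do 2 apply: ler_wpM2r => //.
  by rewrite lerDr ltW.
exists (K + KP), (lamP + a), lamP, interp_proj.
split; first by apply: lt_le_trans K_gt0 _; rewrite lerDl.
split => //; split; first by rewrite lerDl.
split; first exact: interp_proj_idem.
split; first by move=> n n_gt0; rewrite -(evol_succ C n); exact/esym/interp_proj_evol.
move=> m n x n_gt0 nm; have m_gt0 := leq_trans n_gt0 nm.
have [C_fwd C_bwd] := C_growth _ _ x n_gt0 nm.
split.
- by apply: dichotomy_weaken (interp_proj_stable _ _ x n_gt0 nm); rewrite ?powR_ge0 ?S_ge0.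
- by apply: dichotomy_weaken (interp_proj_unstable _ _ x n_gt0 nm); rewrite ?powR_ge0 ?S_ge0.
- exact: le_trans C_fwd (growth_weaken _ _ (ratio_ge1 _ _ n_gt0 nm) (S_ge0 _ x n_gt0)).
- exact: le_trans C_bwd (growth_weaken _ _ (ratio_ge1 _ _ n_gt0 nm) (S_ge0 _ x m_gt0)).
Qed.

End FromDyadicDichotomy.

Lemma strong_PD_of_dyadic_ED : strong_ED (dyadic C) (fun n => S (2 ^ n)%N) -> strong_PD C S.
Proof.
case=> KE [aE [lamE [Q [KE_gt0 [lamE_gt0 [_ [Q_idem [Q_comm Q_bounds]]]]]]]].
apply: (interp_proj_strong_PD _ _ _ (ltW KE_gt0) lamE_gt0 Q_idem Q_comm).
  by move=> m n x /(Q_bounds m n x)[]; rewrite !evol_dyadic.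
by move=> m n x /(Q_bounds m n x)[]; rewrite !evol_dyadic.
Qed.

End DyadicInterpolation.

Theorem strong_PD_iff_dyadic_ED {R : realType} {d : nat}
    (C : nat -> 'M[R]_d) (S : nat -> 'cV[R]_d -> R) :
  (forall n, (1 <= n)%N -> C n \in unitmx) ->
  (forall n, (1 <= n)%N -> is_norm (S n)) ->
  poly_bounded_growth C S ->
  strong_PD C S <-> strong_ED (dyadic C) (fun n => S (2 ^ n)%N).
Proof.
move=> C_unit S_norm [K [a [K_gt0 [a_ge0 C_growth]]]].
split; first exact: dyadic_ED_of_strong_PD.
exact: strong_PD_of_dyadic_ED _ _ _ _ C_unit S_norm K_gt0 a_ge0 C_growth.
Qed.

Section PolynomialRescaling.
Context {R : realType} {d : nat}.
Variables (A : nat -> 'M[R]_d) (S : nat -> 'cV[R]_d -> R) (tau : R).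
Hypothesis A_unit : forall n, (1 <= n)%N -> A n \in unitmx.
Hypothesis S_norm : forall n, (1 <= n)%N -> is_norm (S n).

Local Notation A' := (fun n => ((n.+1)%:R / n%:R) `^ (- tau) *: A n).

Lemma rescale_unit n : (1 <= n)%N -> A' n \in unitmx.
Proof.
by move=> n_gt0; rewrite unitmxZ ?A_unit // unitfE gt_eqF // powR_gt0 // divr_gt0 ?ltr0n.
Qed.

Lemma evol_rescale m n : (1 <= m)%N -> (1 <= n)%N ->
  evol A' m n = (m%:R / n%:R) `^ (- tau) *: evol A m n.
Proof.
move=> m_gt0 n_gt0; rewrite powR_divr ?ltr0n //.
apply: (evol_scale A 1 _ (fun k : nat => (k%:R : R) `^ (- tau))) => // j j_gt0.
  by rewrite powR_divr ?ltr0n.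
by rewrite gt_eqF // powR_gt0 // ltr0n.
Qed.

Lemma rescale_growth : poly_bounded_growth A S -> poly_bounded_growth A' S.
Proof.
case=> K [a [K_gt0 [a_ge0 A_growth]]]; exists K, (a + `|tau|).
split => //; split; first by rewrite addr_ge0.
move=> m n x n_gt0 nm; have m_gt0 := leq_trans n_gt0 nm.
have [A_fwd A_bwd] := A_growth _ _ x n_gt0 nm.
have r_ge1 : 1 <= (m%:R / n%:R : R) by rewrite ler_pdivlMr ?ltr0n // mul1r ler_nat.
have S_ge0 k y : (1 <= k)%N -> 0 <= S k y by move=> k_gt0; exact: is_norm_ge0 (S_norm _ k_gt0) y.
rewrite !evol_rescale // [(n%:R / m%:R) `^ _]powR_divrN ?ltr0n // -!scalemxAl.
rewrite (is_normZ (S_norm _ m_gt0)) (is_normZ (S_norm _ n_gt0)).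
rewrite [`|_ `^ (- tau)|]ger0_norm ?powR_ge0 // [`|_ `^ tau|]ger0_norm ?powR_ge0 //.
set r := (m%:R / n%:R : R) in r_ge1 A_fwd A_bwd *.
split.
- apply: le_trans (ler_wpM2l (powR_ge0 r (- tau)) A_fwd) _.
  rewrite (_ : _ * (K * _ * _) = K * (r `^ (- tau) * r `^ a) * S n x); last by ring.
  apply: ler_wpM2r; first exact: S_ge0.
  by apply: ler_wpM2l; [exact: ltW | rewrite -(normrN tau) powR_mul_le_normD].
- apply: le_trans (ler_wpM2l (powR_ge0 r tau) A_bwd) _.
  rewrite (_ : _ * (K * _ * _) = K * (r `^ tau * r `^ a) * S m x); last by ring.
  apply: ler_wpM2r; first exact: S_ge0.
  by apply: ler_wpM2l; [exact: ltW | rewrite powR_mul_le_normD].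
Qed.

Lemma dyadic_rescale : dyadic A' = fun n => (2 `^ tau)^-1 *: dyadic A n.
Proof.
apply: funext => n; rewrite /dyadic evol_rescale ?expn_gt0 //.
by rewrite expnS natrM mulfK ?pnatr_eq0 ?expn_eq0 // powRN.
Qed.

End PolynomialRescaling.

Theorem corollary2p1 (R : realType) (d : nat) (A : nat -> 'M[R]_d)
  (S : nat -> 'cV[R]_d -> R) :
  (forall n, (1 <= n)%N -> A n \in unitmx) ->
  (forall n, (1 <= n)%N -> is_norm (S n)) ->
  (exists K a : R, 0 < K /\ 0 < a /\
     forall m n (x : 'cV[R]_d), (1 <= n)%N -> (n <= m)%N ->
       S m (evol A m n *m x) <= K * (m%:R / n%:R) `^ a * S n x /\
       S n (evol A n m *m x) <= K * (m%:R / n%:R) `^ a * S m x) ->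
  forall tau : R,
    SigmaPD A S tau <->
    SigmaED (fun n => evol A (2 ^ n.+1)%N (2 ^ n)%N) (fun n => S (2 ^ n)%N) (2 `^ tau).
Proof.
move=> A_unit S_norm [K [a [K_gt0 [a_gt0 A_growth]]]] tau.
have A_poly : poly_bounded_growth A S.
  by exists K, a; split; [done | split; [exact: ltW | exact: A_growth]].
rewrite /SigmaPD /SigmaED -(dyadic_rescale A tau A_unit) strong_PD_iff_dyadic_ED //.
- by split=> [nED | [] //]; split=> //; exact: powR_gt0.
- exact: rescale_unit.
- exact: rescale_growth.
Qed.
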